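(* For every $k\geq1$, a word of $\widetilde A'_k$ and a word of $\widetilde B'_k$ never overlap (in either order, for any shift $0<s<\ell'_k$). Similarly, for every $k\geq0$, a word of $\widetilde A_k$ and a word of $\widetilde B_k$ never overlap (in either order, for any shift $0<s<\ell_k$).
   Context: Alphabet $\{0,1,2\}$. Let $(N_k)_{k\geq1}$ be integers with $N_k\geq4$, $\ell_0=2$, $\ell_k=N_k\ell_{k-1}$; let $N'_k\geq2$ be integers dividing $N_k$ with $N_k/N'_k\geq2$, and $\ell'_k=N'_k\ell_{k-1}$. Words: $a_0=01$, $b_0=02$; for odd $k\geq1$, $a_k=(a_{k-1})^{N_k}$ and $b_k=b_{k-1}2^{(N_k-2)\ell_{k-1}}b_{k-1}$; for even $k\geq2$, $a_k=a_{k-1}1^{(N_k-2)\ell_{k-1}}a_{k-1}$ and $b_k=(b_{k-1})^{N_k}$. $\widetilde A_k=\{a_k,1^{\ell_k}\}$, $\widetilde B_k=\{b_k,2^{\ell_k}\}$. Intermediate dictionaries: for odd $k$, $\widetilde A'_k=\{a'_k,1^{\ell'_k}\}$ with $a'_k=(a_{k-1})^{N'_k}$, and $\widetilde B'_k=\{b'_k,b''_k,2^{\ell'_k}\}$ with $b'_k=b_{k-1}2^{(N'_k-1)\ell_{k-1}}$, $b''_k=2^{(N'_k-1)\ell_{k-1}}b_{k-1}$; for even $k$, $\widetilde A'_k=\{a'_k,a''_k,1^{\ell'_k}\}$ with $a'_k=a_{k-1}1^{(N'_k-1)\ell_{k-1}}$, $a''_k=1^{(N'_k-1)\ell_{k-1}}a_{k-1}$,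 and $\widetilde B'_k=\{b'_k,2^{\ell'_k}\}$ with $b'_k=(b_{k-1})^{N'_k}$. Two words $u,v$ of the same length $\ell$ are said to overlap, with $u$ followed by $v$ at shift $s$ ($0<s<\ell$), if the terminal segment of length $\ell-s$ of $u$ equals the initial segment of length $\ell-s$ of $v$. *)

From mathcomp Require Import all_boot.
Set Implicit Arguments. Unset Strict Implicit. Unset Printing Implicit Defensive.

(* Words over the alphabet {0,1,2} are represented as seq nat (letters 0,1,2). *)
Definition word := seq nat.

Fixpoint ell (N : nat -> nat) (k : nat) : nat :=
  match k with
  | 0 => 2
  | k'.+1 => N k'.+1 * ell N k'
  end.

Definition ell' (N N' : nat -> nat) (k : nat) : nat := N' k * ell N k.-1.

Definition wpow (u : word) (n : nat) : word := flatten (nseq n u).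

Fixpoint ab (N : nat -> nat) (k : nat) : word * word :=
  match k with
  | 0 => ([:: 0; 1], [:: 0; 2])
  | k'.+1 =>
      let a := (ab N k').1 in
      let b := (ab N k').2 in
      let n := N k'.+1 in
      let l := ell N k' in
      if odd k'.+1 then (wpow a n, b ++ nseq ((n - 2) * l) 2 ++ b)
      else (a ++ nseq ((n - 2) * l) 1 ++ a, wpow b n)
  end.

Definition a_ N k := (ab N k).1.
Definition b_ N k := (ab N k).2.

Definition At (N : nat -> nat) k : seq word := [:: a_ N k; nseq (ell N k) 1].
Definition Bt (N : nat -> nat) k : seq word := [:: b_ N k; nseq (ell N k) 2].

Definition At' (N N' : nat -> nat) k : seq word :=
  let a := a_ N k.-1 in let l := ell N k.-1 in let n' := N' k in
  if odd k then [:: wpow a n'; nseq (ell' N N' k) 1]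
  else [:: a ++ nseq ((n' - 1) * l) 1; nseq ((n' - 1) * l) 1 ++ a;
           nseq (ell' N N' k) 1].

Definition Bt' (N N' : nat -> nat) k : seq word :=
  let b := b_ N k.-1 in let l := ell N k.-1 in let n' := N' k in
  if odd k then [:: b ++ nseq ((n' - 1) * l) 2; nseq ((n' - 1) * l) 2 ++ b;
                 nseq (ell' N N' k) 2]
  else [:: wpow b n'; nseq (ell' N N' k) 2].

Definition overlap (l : nat) (u v : word) (s : nat) : Prop :=
  drop (size u - (l - s)) u = take (l - s) v.

From mathcomp Require Import all_boot.

Set Implicit Arguments.
Unset Strict Implicit.

(* Every word of A_k, A'_k ends with the letter 1 and contains no 2, and every
   word of B_k, B'_k ends with 2 and contains no 1.  In an overlap of u followed
   by v the common segment is a nonempty suffix of u, so it contains the last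
   letter of u; that letter would then occur in v, which is impossible. *)

Lemma overlap_last_mem l u v s :
  u != [::] -> s < l -> overlap l u v s -> last 0 u \in v.
Proof.
rewrite /overlap; case/lastP: u => // u x _ lt_sl.
have le_drop : size u + 1 - (l - s) <= size u.
  by rewrite leq_subLR addnC leq_add2r subn_gt0.
rewrite last_rcons size_rcons -addn1 drop_rcons // => eq_seg.
by rewrite -(cat_take_drop (l - s) v) mem_cat -eq_seg mem_rcons mem_head.
Qed.

Definition ends_avoiding (c d : nat) (u : word) : bool :=
  [&& u != [::], last 0 u == c & d \notin u].

Lemma no_overlap_ends_avoiding c d l u v s :
  ends_avoiding c d u -> ends_avoiding d c v -> s < l -> ~ overlap l u v s.
Proof.
case/and3P=> u_nil /eqP u_last _ /and3P [_ _ c_notin_v] lt_sl ov.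
by move/negP: c_notin_v; apply; rewrite -u_last; apply: overlap_last_mem ov.
Qed.

Lemma no_overlap_either_order c d l u v s :
  ends_avoiding c d u -> ends_avoiding d c v -> s < l ->
  ~ overlap l u v s /\ ~ overlap l v u s.
Proof.
move=> end_u end_v lt_sl; split.
- exact: no_overlap_ends_avoiding end_u end_v lt_sl.
- exact: no_overlap_ends_avoiding end_v end_u lt_sl.
Qed.

Lemma ends_avoiding_notin c d u : ends_avoiding c d u -> d \notin u.
Proof. by case/and3P. Qed.

Lemma nseq_notin (c d : nat) n : c != d -> d \notin nseq n c.
Proof. by move=> neq_cd; rewrite mem_nseq eq_sym (negbTE neq_cd) andbF. Qed.

Lemma ends_avoiding_cat c d x y :
  d \notin x -> ends_avoiding c d y -> ends_avoiding c d (x ++ y).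
Proof.
move=> d_notin_x /and3P [y_nil y_last d_notin_y]; apply/and3P; split.
- by case: x {d_notin_x}.
- by rewrite last_cat; case: y {d_notin_y} y_nil y_last.
- by rewrite mem_cat negb_or d_notin_x.
Qed.

Lemma ends_avoiding_nseq c d n :
  0 < n -> c != d -> ends_avoiding c d (nseq n c).
Proof.
case: n => // n _ neq_cd; apply/and3P; split=> //; last exact: nseq_notin.
by elim: n.
Qed.

Lemma ends_avoiding_wpow c d u n :
  0 < n -> ends_avoiding c d u -> ends_avoiding c d (wpow u n).
Proof.
case: n => // n _ end_u; elim: n => [|n IHn]; first by rewrite /wpow /= cats0.
exact: ends_avoiding_cat (ends_avoiding_notin end_u) IHn.
Qed.

Section Dictionaries.

Variables N N' : nat -> nat.
Hypothesis N_gt0 : forall k, 0 < k -> 0 < N k.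
Hypothesis N'_gt1 : forall k, 0 < k -> 1 < N' k.

Lemma ell_gt0 k : 0 < ell N k.
Proof. by elim: k => //= k IHk; rewrite muln_gt0 IHk N_gt0. Qed.

Lemma ends_avoiding_ab k :
  ends_avoiding 1 2 (a_ N k) /\ ends_avoiding 2 1 (b_ N k).
Proof.
rewrite /a_ /b_; elim: k => [|k [end_a end_b]] //=.
have N_pos := N_gt0 (ltn0Sn k).
case: ifP => _; split; try exact: ends_avoiding_wpow.
- apply: ends_avoiding_cat (ends_avoiding_notin end_b) _.
  by apply: ends_avoiding_cat end_b; apply: nseq_notin.
- apply: ends_avoiding_cat (ends_avoiding_notin end_a) _.
  by apply: ends_avoiding_cat end_a; apply: nseq_notin.
Qed.

Lemma ends_avoiding_At k u : u \in At N k -> ends_avoiding 1 2 u.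
Proof.
rewrite !inE => /orP [] /eqP ->; first exact: (ends_avoiding_ab k).1.
exact: ends_avoiding_nseq (ell_gt0 k) _.
Qed.

Lemma ends_avoiding_Bt k v : v \in Bt N k -> ends_avoiding 2 1 v.
Proof.
rewrite !inE => /orP [] /eqP ->; first exact: (ends_avoiding_ab k).2.
exact: ends_avoiding_nseq (ell_gt0 k) _.
Qed.

Variable k : nat.
Hypothesis k_gt0 : 0 < k.

Let ell'_gt0 : 0 < ell' N N' k.
Proof. by rewrite /ell' muln_gt0 ell_gt0 ltnW ?N'_gt1. Qed.

Let pad_gt0 : 0 < (N' k - 1) * ell N k.-1.
Proof. by rewrite muln_gt0 ell_gt0 subn_gt0 N'_gt1. Qed.

Lemma ends_avoiding_At' u : u \in At' N N' k -> ends_avoiding 1 2 u.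
Proof.
have [end_a end_b] := ends_avoiding_ab k.-1.
rewrite /At'; case: ifP => _; rewrite !inE.
- case/orP=> /eqP ->; last exact: ends_avoiding_nseq.
  by apply: ends_avoiding_wpow end_a; rewrite ltnW ?N'_gt1.
- case/or3P=> /eqP ->; last exact: ends_avoiding_nseq.
  + exact: ends_avoiding_cat (ends_avoiding_notin end_a) (ends_avoiding_nseq _ _).
  + by apply: ends_avoiding_cat end_a; apply: nseq_notin.
Qed.

Lemma ends_avoiding_Bt' v : v \in Bt' N N' k -> ends_avoiding 2 1 v.
Proof.
have [end_a end_b] := ends_avoiding_ab k.-1.
rewrite /Bt'; case: ifP => _; rewrite !inE.
- case/or3P=> /eqP ->; last exact: ends_avoiding_nseq.
  + exact: ends_avoiding_cat (ends_avoiding_notin end_b) (ends_avoiding_nseq _ _).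
  + by apply: ends_avoiding_cat end_b; apply: nseq_notin.
- case/orP=> /eqP ->; last exact: ends_avoiding_nseq.
  by apply: ends_avoiding_wpow end_b; rewrite ltnW ?N'_gt1.
Qed.

End Dictionaries.

Theorem lemma3p2 (N N' : nat -> nat)
  (hN : forall k, 1 <= k -> 4 <= N k)
  (hN' : forall k, 1 <= k -> 2 <= N' k)
  (hdvd : forall k, 1 <= k -> N' k %| N k)
  (hquo : forall k, 1 <= k -> 2 <= N k %/ N' k) :
  (forall k, 1 <= k ->
     forall u v, u \in At' N N' k -> v \in Bt' N N' k ->
     forall s, 0 < s < ell' N N' k ->
       ~ overlap (ell' N N' k) u v s /\ ~ overlap (ell' N N' k) v u s) /\
  (forall k,
     forall u v, u \in At N k -> v \in Bt N k ->
     forall s, 0 < s < ell N k ->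
       ~ overlap (ell N k) u v s /\ ~ overlap (ell N k) v u s).
Proof.
(* Only the positivity of N_k and N'_k - 1 matters. *)
have N_gt0 k : 0 < k -> 0 < N k by move/hN; apply: leq_trans.
split=> [k k_gt0 u v Au Bv s /andP [_ lt_s] | k u v Au Bv s /andP [_ lt_s]].
- have end_u := ends_avoiding_At' N_gt0 hN' k_gt0 Au.
  have end_v := ends_avoiding_Bt' N_gt0 hN' k_gt0 Bv.
  exact: no_overlap_either_order end_u end_v lt_s.
- have end_u := ends_avoiding_At N_gt0 Au.
  have end_v := ends_avoiding_Bt N_gt0 Bv.
  exact: no_overlap_either_order end_u end_v lt_s.
Qed.
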